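(* Let $\mathbb{K}$ be an algebraically closed field, and let $f(x), g(x) \in \mathbb{K}[x]$ be monic polynomials, with $d = \deg f \geq 1$. Assume $f$ is squarefree, and let $\mathcal{Z}(f)$ and $\mathcal{Z}(g)$ denote the sets of roots of $f$ and $g$. Define \[ s(x) = \prod_{\zeta \in \mathcal{Z}(f) \setminus (\mathcal{Z}(f) \cap \mathcal{Z}(g))} (x - \zeta). \] Let $M_g$ be the $d \times d$ matrix, in the monomial basis $1, x, \ldots, x^{d-1}$ of $\mathbb{A} = \mathbb{K}[x]/(f)$, of the map $h \mapsto \pi(gh)$, where $\pi(p)$ is the remainder of $p$ modulo $f$. Suppose $\ker(M_g) \neq 0$. Let $K_g$ be a matrix whose columns form a basis of $\ker(M_g)$, and consider a column echelon form of $K_g$. Then the first column of this column echelon form is, up to multiplication by a nonzero scalar, the coefficient vector of $s(x)$ in the basis $1, x, \ldots, x^{d-1}$.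
   Context: A vector $(c_0, \ldots, c_{d-1})^T \in \mathbb{K}^d$ is identified with the polynomial $c_0 + c_1 x + \cdots + c_{d-1} x^{d-1}$. A column echelon form of $K_g$ is a matrix obtained from $K_g$ by elementary column operations, in which the columns are nonzero and the polynomials associated to the columns have strictly increasing degrees from the first column to the last. In particular, the first column has the smallest degree. *)

From mathcomp Require Import all_boot all_order all_algebra.
Set Implicit Arguments. Unset Strict Implicit. Unset Printing Implicit Defensive.
Import GRing.Theory.
Local Open Scope ring_scope.

Definition squarefree (K : fieldType) (f : {poly K}) : Prop :=
  forall p : {poly K}, p * p %| f -> (size p <= 1)%N.

Definition mult_mx (K : fieldType) (d : nat) (f g : {poly K}) : 'M[K]_d :=
  \matrix_(i < d, j < d) ((g * 'X^j) %% f)`_i.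

Definition colpoly (K : fieldType) (d k : nat) (E : 'M[K]_(d, k)) (j : 'I_k)
  : {poly K} := \sum_(i < d) E i j *: 'X^i.

(* E is a column echelon form of A: obtained by elementary column operations
   (i.e. E = A U with U invertible), columns nonzero, and the associated
   polynomials have strictly increasing degrees *)
Definition col_echelon_form_of (K : fieldType) (d k : nat)
  (A E : 'M[K]_(d, k)) : Prop :=
  (exists2 U : 'M[K]_k, U \in unitmx & E = A *m U) /\
  (forall j, colpoly E j != 0) /\
  (forall j1 j2 : 'I_k, (j1 < j2)%N -> (size (colpoly E j1) < size (colpoly E j2))%N).
Arguments mult_mx K d f g : clear implicits.
Arguments mult_mx {K}.

From mathcomp Require Import all_boot all_order all_algebra.
Set Implicit Arguments. Unset Strict Implicit. Unset Printing Implicit Defensive.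
Import GRing.Theory.
Local Open Scope ring_scope.

(* Identifying column vectors with polynomials of size at most d, the kernel
   of M_g consists of the h with f | g h.  As f is squarefree and split, this
   means exactly s | h.  Hence s lies in the kernel and every kernel element
   is a multiple of s.  A nonzero combination of columns of strictly increasing
   degrees has the degree of its last nonzero term, so the first column of an
   echelon form has the least degree among nonzero kernel elements; being a
   multiple of s, it is an associate of s. *)

Section ColumnPolynomials.

Variables (K : fieldType) (d : nat).

Lemma size_colpoly k (A : 'M[K]_(d, k)) j : (size (colpoly A j) <= d)%N.
Proof.
rewrite /colpoly; apply: (big_ind (fun p : {poly K} => size p <= d)%N).
- by rewrite size_poly0.
- by move=> p q Hp Hq; rewrite (leq_trans (size_polyD _ _)) // geq_max Hp Hq.
- by move=> i _; rewrite (leq_trans (size_scale_leq _ _)) // size_polyXn.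
Qed.

Lemma coef_colpoly k (A : 'M[K]_(d, k)) j (i : 'I_d) : (colpoly A j)`_i = A i j.
Proof.
rewrite /colpoly coef_sum (bigD1 i) //= coefZ coefXn eqxx mulr1 big1 ?addr0 //.
by move=> l neq_li; rewrite coefZ coefXn eq_sym val_eqE (negbTE neq_li) mulr0.
Qed.

Lemma colpoly_col k (A : 'M[K]_(d, k)) j : colpoly (col j A) 0 = colpoly A j.
Proof. by apply: eq_bigr => i _; rewrite mxE. Qed.

Lemma colpoly_mulmx k (A : 'M[K]_(d, k)) (u : 'cV[K]_k) :
  colpoly (A *m u) 0 = \sum_j u j 0 *: colpoly A j.
Proof.
rewrite /colpoly; under eq_bigr => i _ do rewrite mxE scaler_suml.
rewrite exchange_big /=; apply: eq_bigr => j _.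
by rewrite scaler_sumr; apply: eq_bigr => i _; rewrite scalerA mulrC.
Qed.

Lemma colpoly_eq0 (v : 'cV[K]_d) : (colpoly v 0 == 0) = (v == 0).
Proof.
apply/eqP/eqP => [v0 | ->]; last by rewrite /colpoly big1 // => i _; rewrite mxE scale0r.
by apply/matrixP => i j; rewrite ord1 -coef_colpoly v0 coef0 mxE.
Qed.

Lemma colpoly_coefs (p : {poly K}) :
  (size p <= d)%N -> colpoly (\col_(i < d) p`_i) 0 = p.
Proof.
move=> size_p; apply/polyP => i; have [lt_id | le_di] := ltnP i d.
  by rewrite (coef_colpoly _ 0 (Ordinal lt_id)) mxE.
by rewrite !nth_default // ?(leq_trans _ le_di) ?size_colpoly.
Qed.

Lemma mult_mx_colpoly (f g : {poly K}) (v : 'cV[K]_d) :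
  size f = d.+1 -> (mult_mx d f g *m v == 0) = (f %| g * colpoly v 0).
Proof.
move=> size_f; have f_neq0 : f != 0 by rewrite -size_poly_eq0 size_f.
have coef_Mv i : (mult_mx d f g *m v) i 0 = ((g * colpoly v 0) %% f)`_i.
  rewrite mxE /colpoly mulr_sumr.
  rewrite (big_morph (fun p => p %% f) (modpD f) (mod0p f)) coef_sum.
  by apply: eq_bigr => l _; rewrite mxE -scalerAr modpZl coefZ mulrC.
apply/eqP/modp_eq0P => [Mv0 | mod0].
  have size_mod : (size ((g * colpoly v 0) %% f)%R <= d)%N.
    by rewrite -ltnS -size_f ltn_modp.
  rewrite -[_ %% f](colpoly_coefs size_mod).
  apply/eqP; rewrite colpoly_eq0; apply/eqP/matrixP => i j.
  by rewrite ord1 mxE -coef_Mv Mv0.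
by apply/matrixP => i j; rewrite ord1 coef_Mv mod0 coef0 mxE.
Qed.

End ColumnPolynomials.

Section IncreasingSizes.

Variables (K : fieldType) (k : nat) (P : 'I_k -> {poly K}).
Hypothesis P_neq0 : forall j, P j != 0.
Hypothesis size_P_increasing :
  forall j1 j2 : 'I_k, (j1 < j2)%N -> (size (P j1) < size (P j2))%N.

Lemma size_sum_increasing (c : 'I_k -> K) (J : 'I_k) :
  c J != 0 -> (forall j : 'I_k, (J < j)%N -> c j = 0) ->
  size (\sum_j c j *: P j) = size (P J).
Proof.
move=> cJ_neq0 c_above_J.
have PJ_pos : (0 < size (P J))%N by rewrite size_poly_gt0.
rewrite (bigD1 J) //= size_polyDl size_scale //.
apply: (big_ind (fun p : {poly K} => size p < size (P J))%N).
- by rewrite size_poly0.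
- by move=> p q Hp Hq; rewrite (leq_ltn_trans (size_polyD _ _)) // gtn_max Hp Hq.
move=> j neq_jJ; have [lt_jJ | lt_Jj | /val_inj eq_jJ] := ltngtP j J.
- by rewrite (leq_ltn_trans (size_scale_leq _ _)) // size_P_increasing.
- by rewrite c_above_J // scale0r size_poly0.
- by rewrite eq_jJ eqxx in neq_jJ.
Qed.

Lemma size_sum_increasing_ge (c : 'I_k -> K) (j0 : 'I_k) :
  nat_of_ord j0 = 0%N -> \sum_j c j *: P j != 0 ->
  (size (P j0) <= size (\sum_j c j *: P j)%R)%N.
Proof.
move=> j0_eq0 sum_neq0; have [j1 cj1_neq0] : exists j, c j != 0.
  apply/existsP; apply: contraNT sum_neq0 => /existsPn c0.
  by rewrite big1 // => j _; move/negPn/eqP: (c0 j) ->; rewrite scale0r.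
case: (@arg_maxnP _ j1 (fun j => c j != 0) (@nat_of_ord k) cj1_neq0) => J cJ_neq0 J_max.
rewrite (size_sum_increasing cJ_neq0) => [|j lt_Jj]; last first.
  by apply/eqP; apply: contraTT lt_Jj => /J_max; rewrite -leqNgt.
have := leq0n J; rewrite -j0_eq0 leq_eqVlt => /orP [/eqP/val_inj -> // | lt_j0J].
by rewrite ltnW // size_P_increasing.
Qed.

End IncreasingSizes.

Definition coprime_part (K : fieldType) (rs : seq K) (g : {poly K}) : {poly K} :=
  \prod_(z <- rs | ~~ root g z) ('X - z%:P).

Lemma squarefree_prod_roots (K : closedFieldType) (f : {poly K}) (rs : seq K) :
  f \is monic -> squarefree f -> uniq rs -> (forall z, root f z = (z \in rs)) ->
  f = \prod_(z <- rs) ('X - z%:P).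
Proof.
move=> f_monic f_sqf rs_uniq root_f.
set P := \prod_(z <- rs) ('X - z%:P).
have P_monic : P \is monic by apply: monic_prod_XsubC.
have /dvdpP [q f_eq] : P %| f.
  by apply: uniq_roots_dvdp; rewrite ?uniq_rootsE //; apply/allP => z; rewrite root_f.
have q_neq0 : q != 0 by apply: contra_eq_neq f_eq => ->; rewrite mul0r monic_neq0.
have size_q : size q == 1%N.
  apply/negPn/negP => /closed_rootP [z qz].
  have /f_sqf : ('X - z%:P) * ('X - z%:P) %| f.
    rewrite f_eq dvdp_mul ?dvdp_XsubCl // root_prod_XsubC -root_f f_eq rootM qz.
    by [].
  by rewrite size_XsubC.
suff : P %= f by rewrite (eqp_monic P_monic f_monic) => /eqP.
have P_dvd_f : P %| f by rewrite f_eq dvdp_mull.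
by rewrite -dvdp_size_eqp // f_eq size_mul ?(monic_neq0 P_monic) // (eqP size_q) add1n.
Qed.

Lemma dvdp_prod_roots_mul (K : fieldType) (rs : seq K) (g h : {poly K}) :
  uniq rs ->
  (\prod_(z <- rs) ('X - z%:P) %| g * h) = (coprime_part rs g %| h).
Proof.
move=> rs_uniq; apply/idP/idP => [dvd_gh | /dvdpP [q ->]].
  rewrite /coprime_part -big_filter uniq_roots_dvdp ?uniq_rootsE ?filter_uniq //.
  apply/allP => z; rewrite mem_filter => /andP [not_gz rs_z].
  have : root (g * h) z by apply: root_dvdp dvd_gh _; rewrite root_prod_XsubC.
  by rewrite rootM (negbTE not_gz).
rewrite mulrCA dvdp_mull // uniq_roots_dvdp ?uniq_rootsE //.
apply/allP => z rs_z; rewrite rootM; case: (boolP (root g z)) => //= not_gz.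
by rewrite /coprime_part -big_filter root_prod_XsubC mem_filter not_gz rs_z.
Qed.

Theorem mainTheorem4 (K : closedFieldType) (f g : {poly K}) (d : nat)
  (rs : seq K) (k : nat) (Kg E : 'M[K]_(d, k)) :
  f \is monic -> g \is monic ->
  size f = d.+1 -> (1 <= d)%N ->
  squarefree f ->
  (* rs enumerates Z(f) without repetition *)
  uniq rs -> (forall z, root f z = (z \in rs)) ->
  (* ker M_g <> 0 *)
  (exists2 v : 'cV[K]_d, v != 0 & mult_mx d f g *m v = 0) ->
  (* the columns of Kg form a basis of ker M_g *)
  mult_mx d f g *m Kg = 0 ->
  (forall v : 'cV[K]_d, mult_mx d f g *m v = 0 -> exists w : 'cV[K]_k, v = Kg *m w) ->
  (forall w : 'cV[K]_k, Kg *m w = 0 -> w = 0) ->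
  col_echelon_form_of Kg E ->
  forall j0 : 'I_k, nat_of_ord j0 = 0%N ->
  exists2 c : K, c != 0 &
    colpoly E j0 = c *: \prod_(z <- rs | ~~ root g z) ('X - z%:P).
Proof.
move=> f_monic _ size_f _ f_sqf rs_uniq root_f [v v_neq0 Mv0] MKg0 Kg_span _.
move=> [[U U_unit E_def] [E_neq0 E_incr]] j0 j0_eq0.
rewrite -/(coprime_part rs g); set s := coprime_part rs g.
have f_def := squarefree_prod_roots f_monic f_sqf rs_uniq root_f.
have ker_M (w : 'cV[K]_d) : (mult_mx d f g *m w == 0) = (s %| colpoly w 0).
  by rewrite mult_mx_colpoly // f_def dvdp_prod_roots_mul.
have s_neq0 : s != 0 by rewrite monic_neq0 ?monic_prod_XsubC.
have size_s : (size s <= d)%N.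
  move/eqP: Mv0; rewrite ker_M => /dvdp_leq; rewrite colpoly_eq0 => /(_ v_neq0).
  by move/leq_trans; apply; apply: size_colpoly.
have [w Kg_w] : exists w, \col_(i < d) s`_i = Kg *m w.
  by apply: Kg_span; apply/eqP; rewrite ker_M colpoly_coefs.
have s_sum : s = \sum_j (invmx U *m w) j 0 *: colpoly E j.
  by rewrite -colpoly_mulmx E_def mulmxA mulmxK // -Kg_w colpoly_coefs.
have s_dvd_E0 : s %| colpoly E j0.
  by rewrite -colpoly_col -ker_M colE mulmxA E_def mulmxA MKg0 !mul0mx.
have size_E0 : (size (colpoly E j0) <= size s)%N.
  by rewrite s_sum size_sum_increasing_ge // -s_sum.
have /eqpfP E0_def : colpoly E j0 %= s.
  by rewrite eqp_sym -dvdp_size_eqp // eqn_leq size_E0 dvdp_leq.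
exists (lead_coef (colpoly E j0) / lead_coef s) => //.
by rewrite mulf_neq0 ?invr_eq0 ?lead_coef_eq0.
Qed.
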